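(* Let $n$ be a positive integer, let $f\in C[0,1]$ and $p=P_{\mathcal{P}_n}(f)$. For any $\mu,\gamma\in C^*[0,1]$: (i) if $\mu([0,1])\neq\gamma([0,1])$, then $\gamma\notin\widehat{D}^*P_{\mathcal{P}_n}(f)(\mu)$ and $\mu\notin\widehat{D}^*P_{\mathcal{P}_n}(f)(\gamma)$; (ii) if $\mu([0,1])\neq 0$, then $\theta^*\notin\widehat{D}^*P_{\mathcal{P}_n}(f)(\mu)$ and $\mu\notin\widehat{D}^*P_{\mathcal{P}_n}(f)(\theta^* )$; (iii) if $\langle\gamma,f-p\rangle<0$, then $\gamma\notin\widehat{D}^*P_{\mathcal{P}_n}(f)(\mu)$ for every $\mu\in C^*[0,1]$.
   Context: $C[0,1]$ is the Banach space of continuous real-valued functions on $[0,1]$ with the maximum norm $\|f\|=\max_{0\le t\le 1}|f(t)|$. For a nonnegative integer $n$, $\mathcal{P}_n\subseteq C[0,1]$ denotes the closed subspace of real polynomials of degree at most $n$. The metric projection $P_{\mathcal{P}_n}:C[0,1]\to\mathcal{P}_n$ maps $f$ to the unique $p\in\mathcal{P}_n$ with $\|f-p\|=\min_{q\in\mathcal{P}_n}\|f-q\|$ (it is single-valued and continuous). The dual $C^*[0,1]$ is identified (Riesz representation) with the space of real regular countably additive Borel set functions (signed measures) $\mu$ on $[0,1]$, with pairing $\langle\mu,f\rangle=\int_0^1 f(t)\,\mu(dt)$; $\mu([0,1])$ is the value of $\mu$ on the whole interval, and $\theta^*$ is the zero measure. For $f\in C[0,1]$ and $\mu\in C^*[0,1]$,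 the Mordukhovich derivative (coderivative) of $P_{\mathcal{P}_n}$ at $f$ applied to $\mu$ is the set $$\widehat{D}^*P_{\mathcal{P}_n}(f)(\mu)=\Big\{\varphi\in C^*[0,1]:\ \limsup_{g\to f,\ g\neq f}\frac{\langle\varphi,g-f\rangle-\langle\mu,P_{\mathcal{P}_n}(g)-P_{\mathcal{P}_n}(f)\rangle}{\|g-f\|+\|P_{\mathcal{P}_n}(g)-P_{\mathcal{P}_n}(f)\|}\le 0\Big\}.$$ *)

From HB Require Import structures.
From mathcomp Require Import all_boot all_order all_algebra.
From mathcomp Require Import all_classical all_reals all_analysis.
Set Implicit Arguments. Unset Strict Implicit. Unset Printing Implicit Defensive.
Import Order.TTheory GRing.Theory Num.Theory.
Import numFieldNormedType.Exports.
Local Open Scope classical_set_scope.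
Local Open Scope ring_scope.

Section Defs.
Variable R : realType.

Definition I01 : set R := `[0, 1]%classic.

(* f (a function R -> R) represents an element of C[0,1]: only its
   restriction to [0,1] matters, and it must be continuous there. *)
Definition Ccont (f : R -> R) : Prop := {within I01, continuous f}.

Definition supnorm (f : R -> R) : R := sup [set `|f t| | t in I01].

Definition polyfun (p : {poly R}) : R -> R := fun t => p.[t].

Definition best_approx (n : nat) (f : R -> R) (p : {poly R}) : Prop :=
  (size p <= n.+1)%N /\
  forall q : {poly R}, (size q <= n.+1)%N ->
    supnorm (f \- polyfun p) <= supnorm (f \- polyfun q).

Definition metric_proj (n : nat) (P : (R -> R) -> {poly R}) : Prop :=
  forall g, Ccont g -> best_approx n g (P g).

(* elements of the dual C*[0,1]: bounded linear functionals on C[0,1]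
   (Riesz: <mu, f> = \int f dmu) *)
Definition dual (L : (R -> R) -> R) : Prop :=
  [/\ (forall g h, Ccont g -> Ccont h -> L (g \+ h) = L g + L h),
      (forall (a : R) g, Ccont g -> L (fun t => a * g t) = a * L g) &
      exists M : R, forall g, Ccont g -> `|L g| <= M * supnorm g].

(* mu([0,1]) = <mu, 1> *)
Definition total_mass (L : (R -> R) -> R) : R := L (fun _ => 1).

Definition zero_dual : (R -> R) -> R := fun _ => 0.

(* phi \in \hat D^* P(f)(mu) : phi in C* and the limsup (g -> f, g <> f)
   of the quotient is <= 0, written with epsilon-delta. *)
Definition coderiv (n : nat) (P : (R -> R) -> {poly R}) (f : R -> R)
    (mu phi : (R -> R) -> R) : Prop :=
  dual phi /\
  forall eps : R, 0 < eps -> exists delta : R, 0 < delta /\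
    forall g, Ccont g -> 0 < supnorm (g \- f) < delta ->
      (phi (g \- f) - mu (polyfun (P g - P f))) /
        (supnorm (g \- f) + supnorm (polyfun (P g - P f))) <= eps.

End Defs.

(* Each assertion is obtained by testing the coderivative inequality along a
   family of perturbations g of f on which the metric projection is explicit.
   For constant shifts g = f + t one has P(g) = P(f) + t, so the difference
   quotient equals t (gamma[0,1] - mu[0,1]) / 2|t|; letting t -> 0 from both
   sides forces the total masses to agree, which gives (i) and (ii).  For
   g = f + t (f - p) with -1 < t < 0 one has P(g) = p, so the quotient equals
   -<gamma, f - p> / ||f - p||, which gives (iii).
   Both identities rest on uniqueness of best uniform approximation from P_n:
   if fewer than n + 2 points were extremal for the error e of a best
   approximation, subtracting a small multiple of a polynomial of degree <= n
   interpolating e there would decrease ||e||; and the midpoint of two best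
   approximations is again best, with an error that can only be extremal where
   both errors coincide, so the two agree at n + 1 points. *)

From mathcomp Require Import all_boot all_order all_algebra.
From mathcomp Require Import all_classical all_reals all_analysis.
From mathcomp Require Import ring lra.
Import Order.TTheory GRing.Theory Num.Theory.
Import numFieldNormedType.Exports.
Local Open Scope ring_scope.
Set Implicit Arguments. Unset Strict Implicit. Unset Printing Implicit Defensive.

Section Interpolation.
Variable F : fieldType.

Lemma poly_interpolation (s : seq F) (e : F -> F) : uniq s ->
  exists2 r : {poly F}, (size r <= size s)%N & {in s, forall x, r.[x] = e x}.
Proof.
elim: s => [_|x s IH /= /andP[xNs /IH[r sr er]]]; first by exists 0; rewrite ?size_poly0.
set w := \prod_(y <- s) ('X - y%:P).
have wx : w.[x] != 0 by rewrite -/(root w x) root_prod_XsubC.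
exists (r + ((e x - r.[x]) / w.[x]) *: w).
  rewrite (leq_trans (size_polyD _ _)) // geq_max (leq_trans sr) //=.
  by rewrite (leq_trans (size_scale_leq _ _)) // size_prod_XsubC.
move=> y; rewrite in_cons => /predU1P[->|ys].
  by rewrite hornerD hornerZ divfK // addrC subrK.
have /eqP wy : root w y by rewrite root_prod_XsubC.
by rewrite hornerD hornerZ wy mulr0 addr0 er.
Qed.

Lemma eq_poly_on_points (k : nat) (q1 q2 : {poly F}) (s : seq F) :
  (size q1 <= k)%N -> (size q2 <= k)%N -> uniq s -> (k <= size s)%N ->
  {in s, forall x, q1.[x] = q2.[x]} -> q1 = q2.
Proof.
move=> sq1 sq2 us ks eq12; apply/eqP; rewrite -subr_eq0; apply/negPn/negP => nz.
have /(max_poly_roots nz) : all (root (q1 - q2)) s.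
  by apply/allP => x xs; rewrite /root hornerD hornerN eq12 // subrr.
move=> /(_ us); rewrite ltnNge => /negP; apply; apply: leq_trans ks.
by rewrite (leq_trans (size_polyD _ _)) // size_polyN geq_max sq1 sq2.
Qed.

End Interpolation.

Section NormInequalities.
Context {F : realFieldType}.

Lemma norm_subr_lt_same_sign (a b E : F) :
  0 < a * b -> `|a| <= E -> `|b| < E -> `|a - b| < E.
Proof.
rewrite ler_norml !ltr_norml => ab /andP[a1 a2] /andP[b1 b2].
apply/andP; split; nra.
Qed.

Lemma norm_midpoint_eq (a b E : F) :
  `|a| <= E -> `|b| <= E -> `|(a + b) / 2| = E -> a = b.
Proof.
rewrite !ler_norml => /andP[a1 a2] /andP[b1 b2] /eqP.
by rewrite eqr_norml => /andP[/orP[] /eqP ab _]; lra.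
Qed.

End NormInequalities.

Section SupNorm.
Context {R : realType}.
Implicit Types f g h : R -> R.

Lemma Ccont_cst {c : R} : Ccont (fun=> c).
Proof. exact/continuous_subspaceT/cst_continuous. Qed.

Lemma Ccont_polyfun {p : {poly R}} : Ccont (polyfun p).
Proof. exact/continuous_subspaceT/continuous_horner. Qed.

Lemma CcontD f g : Ccont f -> Ccont g -> Ccont (fun x => f x + g x).
Proof. by move=> cf cg x; apply: continuousD; [exact: cf | exact: cg]. Qed.

Lemma CcontB f g : Ccont f -> Ccont g -> Ccont (fun x => f x - g x).
Proof. by move=> cf cg x; apply: continuousB; [exact: cf | exact: cg]. Qed.

Lemma CcontM f g : Ccont f -> Ccont g -> Ccont (fun x => f x * g x).
Proof. by move=> cf cg x; apply: continuousM; [exact: cf | exact: cg]. Qed.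

Lemma CcontZ (a : R) f : Ccont f -> Ccont (fun x => a * f x).
Proof. exact/CcontM/Ccont_cst. Qed.

Lemma Ccont_norm f : Ccont f -> Ccont (fun x => `|f x|).
Proof. by move=> cf x; apply: continuous_comp; [exact: cf | exact: norm_continuous]. Qed.

Lemma I01_0 : I01 (0 : R).
Proof. by rewrite /I01 /= in_itv /= lexx ler01. Qed.

Lemma supnorm_max h t : I01 t -> (forall s, I01 s -> `|h s| <= `|h t|) ->
  supnorm h = `|h t|.
Proof.
move=> It tmax; apply/eqP; rewrite eq_le; apply/andP; split.
  by apply: ge_sup => [|_ [s Is <-]]; [exists `|h t|, t | exact: tmax].
apply: sup_upper_bound; last by exists t.
by split; [exists `|h t|, t | exists `|h t| => _ [s Is <-]; exact: tmax].
Qed.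

Lemma supnorm_attained h : Ccont h ->
  exists2 t, I01 t & supnorm h = `|h t| /\ forall s, I01 s -> `|h s| <= `|h t|.
Proof.
move=> ch; have [t It tmax] := EVT_max ler01 (Ccont_norm ch).
by exists t => //; split => [|s Is]; [apply: supnorm_max | apply: tmax].
Qed.

Lemma supnorm_ub h t : Ccont h -> I01 t -> `|h t| <= supnorm h.
Proof. by move=> /supnorm_attained[c _ [-> cmax]]; apply: cmax. Qed.

Lemma supnorm_le h M : Ccont h -> (forall t, I01 t -> `|h t| <= M) -> supnorm h <= M.
Proof. by move=> /supnorm_attained[c Ic [-> _]]; apply. Qed.

Lemma supnorm_ge0 h : Ccont h -> 0 <= supnorm h.
Proof. by move=> ch; apply: le_trans (supnorm_ub ch I01_0). Qed.

Lemma supnormZ (a : R) h : Ccont h -> supnorm (fun x => a * h x) = `|a| * supnorm h.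
Proof.
move=> /supnorm_attained[c Ic [-> cmax]]; rewrite -normrM.
by apply: supnorm_max => // s Is; rewrite !normrM ler_wpM2l ?cmax.
Qed.

Lemma supnorm_cst (c : R) : supnorm (fun=> c) = `|c|.
Proof. by apply: (supnorm_max (t := 0)) => //; exact: I01_0. Qed.

End SupNorm.

Section Descent.
Context {R : realType}.
Implicit Types (e : R -> R) (r : {poly R}).

Lemma extremal_margin e r : Ccont e ->
  (forall x, I01 x -> `|e x| = supnorm e -> 0 < r.[x] * e x) ->
  exists2 eta, 0 < eta &
    forall x, I01 x -> r.[x] * e x <= 0 -> `|e x| <= supnorm e - eta.
Proof.
move=> ce re_pos; set E := supnorm e.
(* [phi] is [E - |e|] plus the positive part of [r e]; the hypothesis makes it
   positive at the extremal points, hence everywhere on [0, 1]. *)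
pose phi x := E - `|e x| + (r.[x] * e x + `|r.[x] * e x|) / 2.
have re_cont : Ccont (fun x => r.[x] * e x) by exact: CcontM Ccont_polyfun ce.
have cphi : Ccont phi.
  apply: CcontD (CcontB Ccont_cst (Ccont_norm ce)) _.
  by apply: CcontM Ccont_cst; apply: CcontD re_cont (Ccont_norm re_cont).
have [c Ic cmin] := EVT_min ler01 cphi.
exists (phi c) => [|x Ix rex]; last first.
  by have := cmin x Ix; rewrite /phi (ler0_norm rex); lra.
have ec : `|e c| <= E by apply: supnorm_ub.
have re0 : 0 <= r.[c] * e c + `|r.[c] * e c|
  by have := ler_norm (- (r.[c] * e c)); rewrite normrN; lra.
have [ecE|ecE] := ltrP `|e c| E; first by rewrite /phi; lra.
have {}ecE : `|e c| = E by apply/le_anti; rewrite ec ecE.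
by have := re_pos c Ic ecE; rewrite /phi => pos; rewrite (gtr0_norm pos); lra.
Qed.

Lemma supnorm_descent e r : Ccont e -> 0 < supnorm e ->
  (forall x, I01 x -> `|e x| = supnorm e -> 0 < r.[x] * e x) ->
  exists2 eps, 0 < eps & supnorm (fun x => e x - eps * r.[x]) < supnorm e.
Proof.
move=> ce Epos /(extremal_margin ce)[eta eta0 margin].
set E := supnorm e in Epos margin *.
set M := supnorm (polyfun r); have M0 : 0 <= M by apply/supnorm_ge0/Ccont_polyfun.
set m := Num.min eta E; have m0 : 0 < m by rewrite lt_min eta0.
have [meta mE] : m <= eta /\ m <= E by split; rewrite ge_min lexx ?orbT.
pose eps := m / (2 * (M + 1)).
have eps0 : 0 < eps by apply: divr_gt0 => //; lra.
have small x : I01 x -> `|eps * r.[x]| < m.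
  move=> Ix; rewrite normrM (gtr0_norm eps0).
  have : `|r.[x]| <= M by apply: (supnorm_ub Ccont_polyfun).
  have : eps * (2 * (M + 1)) = m by rewrite mulfVK // lt0r_neq0 //; lra.
  nra.
exists eps => //.
have cd : Ccont (fun x => e x - eps * r.[x]) by apply/CcontB/CcontZ/Ccont_polyfun.
have [x Ix [-> _]] := supnorm_attained cd.
have [rex|rex] := ltrP 0 (r.[x] * e x).
  apply: norm_subr_lt_same_sign; [|exact: supnorm_ub|].
    by rewrite mulrCA mulr_gt0 // mulrC.
  by apply: lt_le_trans (small x Ix) mE.
apply: le_lt_trans (ler_normB _ _) _.
by have := margin x Ix rex; have := small x Ix; lra.
Qed.

End Descent.

Section Uniqueness.
Context {R : realType}.
Variable n : nat.
Implicit Types (g : R -> R) (q : {poly R}).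

Definition extremal_point g q x :=
  I01 x /\ `|g x - q.[x]| = supnorm (g \- polyfun q).

Lemma best_approx_extremal_not_small g q s : Ccont g -> best_approx n g q ->
  0 < supnorm (g \- polyfun q) -> uniq s -> (size s <= n.+1)%N ->
  ~ (forall x, extremal_point g q x -> x \in s).
Proof.
move=> cg [sq qbest] Epos us ss sZ; set e := g \- polyfun q.
have ce : Ccont e by apply: CcontB cg Ccont_polyfun.
(* Interpolating the error on [s] gives a direction [r] with [r e = e ^ 2 > 0]
   at every extremal point, along which the error decreases. *)
have [r sr er] := poly_interpolation e us.
have [eps eps0] : exists2 eps, 0 < eps & supnorm (fun x => e x - eps * r.[x]) < supnorm e.
  apply: supnorm_descent => // x Ix Zx; have xs := sZ x (conj Ix Zx).
  rewrite er // -expr2 exprn_even_gt0 //=; apply: contraTneq Epos => ex0.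
  by rewrite -/e -Zx ex0 normr0 ltxx.
apply/negP; rewrite -leNgt.
have -> : (fun x => e x - eps * r.[x]) = g \- polyfun (q + eps *: r).
  by apply/funext => x; rewrite /e /polyfun /= hornerD hornerZ opprD addrA.
apply: qbest; rewrite (leq_trans (size_polyD _ _)) // geq_max sq.
by rewrite (leq_trans (size_scale_leq _ _)) // (leq_trans sr).
Qed.

Lemma best_approx_extremal_points g q : Ccont g -> best_approx n g q ->
  0 < supnorm (g \- polyfun q) ->
  exists s, [/\ uniq s, size s = n.+1 & forall x, x \in s -> extremal_point g q x].
Proof.
move=> cg qbest Epos.
suff : forall k, (k <= n.+1)%N ->
  exists s, [/\ uniq s, size s = k & forall x, x \in s -> extremal_point g q x].
  exact.
elim=> [|k IH] lt_kn; first by exists [::].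
have [s [us ss sZ]] := IH (ltnW lt_kn).
have [[x [Zx xNs]]|] := pselect (exists x, extremal_point g q x /\ x \notin s).
  exists (x :: s); split => /=; [by rewrite xNs us | by rewrite ss |].
  by move=> y; rewrite in_cons => /predU1P[->|/sZ].
move=> noZ; exfalso; apply: (best_approx_extremal_not_small cg qbest Epos us).
  by rewrite ss ltnW.
by move=> x Zx; apply: contrapT => xNs; apply: noZ; exists x; split => //; apply/negP.
Qed.

Lemma uniq_points_I01 k : exists s : seq R,
  [/\ uniq s, size s = k & forall x, x \in s -> I01 x].
Proof.
exists [seq i%:R / k%:R | i <- iota 0 k]; split.
- rewrite map_inj_in_uniq ?iota_uniq // => i j; rewrite !mem_iota /= => ik _.
  move/mulIf; rewrite invr_eq0 pnatr_eq0 -lt0n (leq_ltn_trans _ ik) //.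
  by move=> /(_ isT) /eqP; rewrite eqr_nat => /eqP.
- by rewrite size_map size_iota.
- move=> x /mapP[i]; rewrite mem_iota add0n => /andP[_ ik] ->.
  rewrite /I01 /= in_itv /= divr_ge0 ?ler0n //=.
  by rewrite ler_pdivrMr ?ltr0n ?(leq_ltn_trans _ ik) // mul1r ler_nat ltnW.
Qed.

Lemma best_approx_midpoint g q1 q2 : Ccont g ->
  best_approx n g q1 -> best_approx n g q2 -> best_approx n g (2^-1 *: (q1 + q2)).
Proof.
move=> cg [sq1 q1best] [sq2 q2best]; split => [|q sq].
  rewrite (leq_trans (size_scale_leq _ _)) // (leq_trans (size_polyD _ _)) //.
  by rewrite geq_max sq1 sq2.
apply: le_trans (q1best q sq); apply: supnorm_le => [|x Ix].
  exact: CcontB cg Ccont_polyfun.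
have := supnorm_ub (CcontB cg (@Ccont_polyfun _ q1)) Ix.
have := q2best q1 sq1; have := supnorm_ub (CcontB cg (@Ccont_polyfun _ q2)) Ix.
rewrite /polyfun /= hornerZ hornerD.
have -> : g x - 2^-1 * (q1.[x] + q2.[x]) = ((g x - q1.[x]) + (g x - q2.[x])) / 2 by field.
rewrite normrM (ger0_norm (_ : 0 <= 2^-1)) ?invr_ge0 ?ler0n //.
by have := ler_normD (g x - q1.[x]) (g x - q2.[x]); lra.
Qed.

Lemma best_approx_unique g q1 q2 : Ccont g ->
  best_approx n g q1 -> best_approx n g q2 -> q1 = q2.
Proof.
move=> cg q1best q2best; have [sq1 _] := q1best; have [sq2 _] := q2best.
set E := supnorm (g \- polyfun q1).
have c1 : Ccont (g \- polyfun q1) by apply: CcontB cg Ccont_polyfun.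
have c2 : Ccont (g \- polyfun q2) by apply: CcontB cg Ccont_polyfun.
have E2 : supnorm (g \- polyfun q2) = E.
  by apply: le_anti; rewrite q2best.2 ?q1best.2.
have err1 x : I01 x -> `|g x - q1.[x]| <= E by apply: supnorm_ub c1.
have err2 x : I01 x -> `|g x - q2.[x]| <= E by rewrite -E2; apply: supnorm_ub c2.
suff [s [us ss seq]] : exists s, [/\ uniq s, size s = n.+1 &
    forall x, x \in s -> g x - q1.[x] = g x - q2.[x]].
  apply: (eq_poly_on_points sq1 sq2 us (eq_leq (esym ss))) => x /seq /eqP.
  by rewrite -subr_eq0 opprB addrC subrKA subr_eq0 => /eqP.
have [Epos|E0] := ltrP 0 E; last first.
  have {}E0 : E = 0 by apply: le_anti; rewrite E0 supnorm_ge0.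
  have [s [us ss sI]] := uniq_points_I01 n.+1; exists s; split => // x /sI Ix.
  by have := err1 x Ix; have := err2 x Ix; rewrite E0 !normr_le0 => /eqP -> /eqP ->.
have mbest := best_approx_midpoint cg q1best q2best.
set q := 2^-1 *: (q1 + q2) in mbest; have [sq _] := mbest.
have Eq : supnorm (g \- polyfun q) = E by apply: le_anti; rewrite mbest.2 ?q1best.2.
have [s [us ss sZ]] : exists s, [/\ uniq s, size s = n.+1 &
    forall x, x \in s -> extremal_point g q x].
  by apply: best_approx_extremal_points; rewrite ?Eq.
exists s; split => // x /sZ[Ix]; rewrite Eq => Zx.
apply: norm_midpoint_eq (err1 x Ix) (err2 x Ix) _; rewrite -Zx /q hornerZ hornerD.
by congr `|_|; field.
Qed.

End Uniqueness.

Section Dual.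
Context {R : realType}.
Implicit Types L : (R -> R) -> R.

Lemma dual_cst L (t : R) : dual L -> L (fun=> t) = t * total_mass L.
Proof.
case=> _ LZ _; rewrite /total_mass -LZ; last exact: Ccont_cst.
by congr L; apply/funext => x; rewrite mulr1.
Qed.

Lemma dual_zero : dual (@zero_dual R).
Proof.
split=> [g h _ _|a g _|]; rewrite /zero_dual ?addr0 ?mulr0 //.
by exists 0 => g _; rewrite normr0 mul0r.
Qed.

End Dual.

Section MetricProjection.
Context {R : realType}.
Variables (n : nat) (P : (R -> R) -> {poly R}).
Hypothesis P_proj : metric_proj n P.
Implicit Types (f : R -> R) (mu phi : (R -> R) -> R).

Lemma metric_proj_shift f (c : R) : Ccont f -> P (fun x => f x + c) = P f + c%:P.
Proof.
move=> cf; have cg : Ccont (fun x => f x + c) by apply: CcontD cf Ccont_cst.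
apply: best_approx_unique cg (P_proj cg) _.
have [sf fbest] := P_proj cf.
have size_shift (q : {poly R}) (a : R) :
    (size q <= n.+1)%N -> (size (q + a%:P)%R <= n.+1)%N.
  move=> sq; rewrite (leq_trans (size_polyD _ _)) // geq_max sq.
  by rewrite (leq_trans (size_polyC_leq1 _)).
split => [|q sq]; first exact: size_shift.
have -> : (fun x => f x + c) \- polyfun (P f + c%:P) = f \- polyfun (P f).
  by apply/funext => x; rewrite /polyfun /= hornerD hornerC; ring.
have -> : (fun x => f x + c) \- polyfun q = f \- polyfun (q + (- c)%:P).
  by apply/funext => x; rewrite /polyfun /= hornerD hornerC; ring.
exact/fbest/size_shift.
Qed.

Lemma metric_proj_residual f (t : R) : Ccont f -> -1 < t ->
  P (fun x => f x + t * (f x - (P f).[x])) = P f.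
Proof.
move=> cf t1; set p := P f; set g := fun x => f x + t * (f x - p.[x]).
have cr : Ccont (f \- polyfun p) by apply: CcontB cf Ccont_polyfun.
have cg : Ccont g by apply/CcontD/CcontZ.
apply: best_approx_unique cg (P_proj cg) _.
have [sp pbest] := P_proj cf; have t1_gt0 : 0 < 1 + t by lra.
split => // q sq; set q' := p + (1 + t)^-1 *: (q - p).
have -> : g \- polyfun p = (fun x => (1 + t) * (f \- polyfun p) x).
  by apply/funext => x; rewrite /g /polyfun /=; ring.
have -> : g \- polyfun q = (fun x => (1 + t) * (f \- polyfun q') x).
  apply/funext => x; rewrite /g /polyfun /q' /= hornerD hornerZ hornerD hornerN.
  by field; rewrite lt0r_neq0.
rewrite !supnormZ //; last by apply: CcontB cf Ccont_polyfun.
rewrite (gtr0_norm t1_gt0) ler_pM2l //; apply: pbest.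
rewrite (leq_trans (size_polyD _ _)) // geq_max sp (leq_trans (size_scale_leq _ _)) //.
by rewrite (leq_trans (size_polyD _ _)) // size_polyN geq_max sq sp.
Qed.

Lemma coderiv_const_direction f mu phi (s : R) : Ccont f -> dual mu ->
  coderiv n P f mu phi -> `|s| = 1 -> s * (total_mass phi - total_mass mu) <= 0.
Proof.
move=> cf dmu [dphi lim] s1; apply/ler_addgt0Pr => e e0; rewrite add0r.
have [delta [delta0 quot_le]] := lim (e / 2) (divr_gt0 e0 (ltr0n R 2)).
set t := s * (delta / 2); set g := fun x => f x + t.
have t_norm : `|t| = delta / 2 by rewrite normrM s1 mul1r gtr0_norm ?divr_gt0.
have g_f : g \- f = fun=> t by apply/funext => x; rewrite /g /=; ring.
have Pg_f : polyfun (P g - P f) = fun=> t.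
  by apply/funext => x; rewrite metric_proj_shift // /polyfun addrC addKr hornerC.
have := quot_le g (CcontD cf Ccont_cst).
rewrite g_f Pg_f supnorm_cst t_norm !dual_cst // -mulrBr ler_pdivrMr; last lra.
have -> : 0 < delta / 2 < delta by apply/andP; split; lra.
by move=> /(_ isT); rewrite /t -mulrA mulrAC; nra.
Qed.

Lemma coderiv_total_mass f mu phi : Ccont f -> dual mu ->
  coderiv n P f mu phi -> total_mass phi = total_mass mu.
Proof.
move=> cf dmu D; apply/eqP; rewrite -subr_eq0 eq_le.
have := coderiv_const_direction cf dmu D (normr1 R).
have := coderiv_const_direction cf dmu D (normrN1 R).
by rewrite mul1r mulN1r oppr_le0 => -> ->.
Qed.

Lemma coderiv_residual_ge0 f nu gamma : Ccont f -> dual nu ->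
  coderiv n P f nu gamma -> 0 <= gamma (f \- polyfun (P f)).
Proof.
move=> cf dnu [dgamma lim]; set h := f \- polyfun (P f); set N := supnorm h.
have ch : Ccont h by apply: CcontB cf Ccont_polyfun.
have [_ gammaZ [M gamma_bd]] := dgamma.
have [Npos|N0] := ltrP 0 N; last first.
  have {}N0 : N = 0 by apply/le_anti; rewrite N0 supnorm_ge0.
  by have := gamma_bd h ch; rewrite -/N N0 mulr0 normr_le0 => /eqP ->.
rewrite -oppr_le0; apply/ler_addgt0Pr => e e0; rewrite add0r.
have [delta [delta0 quot_le]] := lim (e / N) (divr_gt0 e0 Npos).
(* Chosen so that [-1 < t < 0] and [|t| N < delta]. *)
set t := - (delta / (delta + N)); set g := fun x => f x + t * (f x - (P f).[x]).
have t_neg : t < 0 by rewrite oppr_lt0 divr_gt0 // addr_gt0.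
have t_gtN1 : -1 < t by rewrite ltrN2 ltr_pdivrMr ?addr_gt0 // mul1r ltrDl.
have tN_lt : - t * N < delta.
  rewrite opprK mulrAC ltr_pdivrMr ?addr_gt0 //; nra.
have g_f : g \- f = fun x => t * h x by apply/funext => x; rewrite /g /h /polyfun /=; ring.
have Pg_f : polyfun (P g - P f) = fun=> 0.
  by apply/funext => x; rewrite metric_proj_residual // subrr /polyfun horner0.
have := quot_le g (CcontD cf (CcontZ ch)).
rewrite g_f Pg_f supnorm_cst supnormZ // gammaZ // dual_cst // (ltr0_norm t_neg).
rewrite normr0 mul0r subr0 addr0 ler_pdivrMr ?mulr_gt0 ?oppr_gt0 //.
rewrite -/N tN_lt /= => /(_ isT).
by rewrite mulrCA divfK ?lt0r_neq0 //; nra.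
Qed.

End MetricProjection.

Theorem theorem5p1 (R : realType) (n : nat) (P : (R -> R) -> {poly R})
    (f : R -> R) (mu gamma : (R -> R) -> R) :
  (0 < n)%N -> metric_proj n P -> Ccont f -> dual mu -> dual gamma ->
  let p := polyfun (P f) in
  [/\ (total_mass mu != total_mass gamma ->
         ~ coderiv n P f mu gamma /\ ~ coderiv n P f gamma mu),
      (total_mass mu != 0 ->
         ~ coderiv n P f mu (@zero_dual R) /\ ~ coderiv n P f (@zero_dual R) mu) &
      (gamma (f \- p) < 0 ->
         forall nu, dual nu -> ~ coderiv n P f nu gamma)].
Proof.
move=> _ P_proj cf dmu dgamma p; split.
- move=> neq; split=> D.
    by move: neq; rewrite (coderiv_total_mass P_proj cf dmu D) eqxx.
  by move: neq; rewrite (coderiv_total_mass P_proj cf dgamma D) eqxx.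
- move=> mu0; split=> D.
    by move: mu0; rewrite -(coderiv_total_mass P_proj cf dmu D) /total_mass /zero_dual eqxx.
  by move: mu0; rewrite (coderiv_total_mass P_proj cf dual_zero D) /total_mass /zero_dual eqxx.
- move=> gamma_neg nu dnu D.
  by have := coderiv_residual_ge0 P_proj cf dnu D; rewrite leNgt gamma_neg.
Qed.
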